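(* Let $p$ be an odd prime. Every nilpotent matrix $A\in\mathfrak{gl}_2(\mathbb{Z}_p)$ is multiplicatively-similar to precisely one of the matrices $\begin{pmatrix}0&0\\0&0\end{pmatrix}$ or $p^s\begin{pmatrix}0&0\\1&0\end{pmatrix}$, $s\in\mathbb{N}_0$. Let $\rho\in\mathbb{Z}_p^*$ be not a square modulo $p$. Then every non-nilpotent matrix $A\in\mathfrak{gl}_2(\mathbb{Z}_p)$ is multiplicatively-similar to precisely one matrix of the form $p^sA_0$, where $s\in\mathbb{N}_0$ and $A_0$ is one of the following core matrices: (1) $\begin{pmatrix}1&0\\0&1\end{pmatrix}$; (2) $\begin{pmatrix}1&0\\0&1\end{pmatrix}+p^r\begin{pmatrix}0&d\\1&0\end{pmatrix}$, where $r\in\mathbb{N}$ and $d\in\mathbb{Z}_p$; (3) $\begin{pmatrix}0&d\\1&p^r\end{pmatrix}$, where $r\in\mathbb{N}_0$ and $d\in\mathbb{Z}_p$; (4) $\begin{pmatrix}0&p^r\\1&0\end{pmatrix}$ or $\begin{pmatrix}0&\rho p^r\\1&0\end{pmatrix}$, where $r\in\mathbb{N}_0$.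
   Context: Two matrices $A,A'\in\mathfrak{gl}_2(\mathbb{Z}_p)$ are multiplicatively-similar if $A'=uB^{-1}AB$ for some $u\in\mathbb{Z}_p^*$ and $B\in\mathrm{GL}_2(\mathbb{Z}_p)$. $\mathbb{N}=\{1,2,\ldots\}$, $\mathbb{N}_0=\mathbb{N}\cup\{0\}$. *)

From HB Require Import structures.
From mathcomp Require Import all_boot all_order all_algebra.
From mathcomp Require Import boolp.
Set Implicit Arguments. Unset Strict Implicit. Unset Printing Implicit Defensive.
Import Order.TTheory GRing.Theory Num.Theory.
Local Open Scope ring_scope.

(* The ring Z_p of p-adic integers, as the inverse limit of the Z/p^n Z.    *)
(* An element is a sequence (x_n) of integers with x_n = x_{n+1} mod p^n,   *)
(* each x_n being reduced (0 <= x_n < p^n).  As for 'Z_p in zmodp, the      *)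
(* modulus is maxn p 2, so that this is a genuine ring for every p; for a   *)
(* prime p it is exactly p.                                                 *)

Section Padic.
Variable p : nat.

Definition zpmod (n : nat) : int := ((maxn p 2) ^ n)%N%:Z.

Definition zp_coherent (x : nat -> int) := forall n, x n = (x n.+1 %% zpmod n)%Z.

Record padic_int := PadicInt { zpval : nat -> int; zpvalP : zp_coherent zpval }.

HB.instance Definition _ := gen_eqMixin padic_int.
HB.instance Definition _ := gen_choiceMixin padic_int.

Lemma zpmod_neq0 n : zpmod n != 0.
Proof. rewrite /zpmod eqz_nat expn_eq0 negb_and; apply/orP; left; rewrite -lt0n; by apply: leq_trans (leq_maxr _ _). Qed.

Lemma zpmodS n : zpmod n.+1 = zpmod n * (maxn p 2)%:Z.
Proof. by rewrite /zpmod expnS mulnC PoszM. Qed.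

Lemma zp_red_red n (a : int) : modz (modz a (zpmod n.+1)) (zpmod n) = modz a (zpmod n).
Proof.
rewrite [in RHS](divz_eq a (zpmod n.+1)) zpmodS [zpmod n * _]mulrC mulrA modzMDl.
by [].
Qed.

Lemma zp_eq (x y : padic_int) : zpval x =1 zpval y -> x = y.
Proof.
case: x y => [x xP] [y yP] /= /funext exy; subst y.
by rewrite (Prop_irrelevance xP yP).
Qed.


Definition zp_red_of (g : nat -> int)
  (gP : forall n, (g n.+1 = g n %[mod zpmod n])%Z) : padic_int.
Proof.
refine (@PadicInt (fun n => (g n %% zpmod n)%Z) _) => n.
by rewrite zp_red_red gP.
Defined.

Lemma zp_cong (x : padic_int) n : (zpval x n.+1 = zpval x n %[mod zpmod n])%Z.
Proof. by rewrite [zpval x n](zpvalP x) modz_mod. Qed.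

Lemma zp_reduced (x : padic_int) n : (zpval x n %% zpmod n)%Z = zpval x n.
Proof. by rewrite [in RHS](zpvalP x) [in LHS](zpvalP x) modz_mod. Qed.

Definition zp0 := @zp_red_of (fun _ => 0) (fun _ => erefl).
Definition zp1 := @zp_red_of (fun _ => 1) (fun _ => erefl).

Lemma zp_opp_cong (x : padic_int) n :
  ((- zpval x n.+1) = - zpval x n %[mod zpmod n])%Z.
Proof. by rewrite -modzNm zp_cong modzNm. Qed.

Lemma zp_add_cong (x y : padic_int) n :
  ((zpval x n.+1 + zpval y n.+1) = zpval x n + zpval y n %[mod zpmod n])%Z.
Proof. by rewrite -modzDm !zp_cong modzDm. Qed.

Lemma zp_mul_cong (x y : padic_int) n :
  ((zpval x n.+1 * zpval y n.+1) = zpval x n * zpval y n %[mod zpmod n])%Z.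
Proof. by rewrite -modzMm !zp_cong modzMm. Qed.

Definition zp_opp x := @zp_red_of _ (zp_opp_cong x).
Definition zp_add x y := @zp_red_of _ (zp_add_cong x y).
Definition zp_mul x y := @zp_red_of _ (zp_mul_cong x y).

Lemma zp_addA : associative zp_add.
Proof. by move=> x y z; apply: zp_eq => n /=; rewrite modzDml modzDmr addrA. Qed.
Lemma zp_addC : commutative zp_add.
Proof. by move=> x y; apply: zp_eq => n /=; rewrite addrC. Qed.
Lemma zp_add0 : left_id zp0 zp_add.
Proof. by move=> x; apply: zp_eq => n /=; rewrite mod0z add0r zp_reduced. Qed.
Lemma zp_addN : left_inverse zp0 zp_opp zp_add.
Proof. by move=> x; apply: zp_eq => n /=; rewrite modzDml addNr. Qed.

HB.instance Definition _ :=
  GRing.isZmodule.Build padic_int zp_addA zp_addC zp_add0 zp_addN.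

Lemma zp_mulA : associative zp_mul.
Proof. by move=> x y z; apply: zp_eq => n /=; rewrite modzMml modzMmr mulrA. Qed.
Lemma zp_mulC : commutative zp_mul.
Proof. by move=> x y; apply: zp_eq => n /=; rewrite mulrC. Qed.
Lemma zp_mul1 : left_id zp1 zp_mul.
Proof. by move=> x; apply: zp_eq => n /=; rewrite modzMml mul1r zp_reduced. Qed.
Lemma zp_mulDl : left_distributive zp_mul zp_add.
Proof.
move=> x y z; apply: zp_eq => n /=.
by rewrite modzMml -modzDm modz_mod modz_mod modzDm mulrDl.
Qed.
Lemma zp_one_neq0 : zp1 != (zp0 : padic_int).
Proof.
apply/eqP => /(congr1 (fun x => zpval x 1%N)) /=.
rewrite mod0z modz_small // /zpmod expn1 ltz_nat.
by case: p => [|[|q]].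
Qed.

HB.instance Definition _ :=
  GRing.Zmodule_isComNzRing.Build padic_int zp_mulA zp_mulC zp_mul1 zp_mulDl
    zp_one_neq0.

Definition zp_unit : {pred padic_int} :=
  fun x => `[< exists y : padic_int, y * x = 1 >].

Definition zp_inv (x : padic_int) : padic_int :=
  match pselect (exists y : padic_int, y * x = 1) with
  | left h => projT1 (cid h)
  | right _ => x
  end.

Lemma zp_mulVx : {in zp_unit, left_inverse 1 zp_inv *%R}.
Proof.
move=> x hx; have /asboolP h := hx; rewrite /zp_inv.
by case: pselect => // h'; case: cid.
Qed.

Lemma zp_unitPl (x y : padic_int) : y * x = 1 -> zp_unit x.
Proof. by move=> h; apply/asboolP; exists y. Qed.

Lemma zp_inv_out : {in [predC zp_unit], zp_inv =1 id}.
Proof.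
move=> x; rewrite inE /= => hx; have h : ~ (exists y : padic_int, y * x = 1) by move=> /asboolP h'; rewrite /in_mem /= /zp_unit h' in hx.
rewrite /zp_inv.
by case: pselect.
Qed.

HB.instance Definition _ :=
  GRing.ComNzRing_hasMulInverse.Build padic_int zp_mulVx zp_unitPl zp_inv_out.

End Padic.

Notation "''Z_[' p ]" := (padic_int p) (format "''Z_[' p ]") : type_scope.

Definition mx22 (R : nzRingType) (a b c d : R) : 'M[R]_2 :=
  \matrix_(i < 2, j < 2)
    if i == 0 then (if j == 0 then a else b) else (if j == 0 then c else d).

Definition mult_similar (R : comUnitRingType) (A A' : 'M[R]_2) : Prop :=
  exists (u : R) (B : 'M[R]_2),
    [/\ u \is a GRing.unit, B \in unitmx & A' = u *: (invmx B *m A *m B)].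

Definition mx_nilpotent (R : nzRingType) (A : 'M[R]_2) : Prop :=
  exists k : nat, A ^+ k = 0.

Definition nonsquare_mod_p (p : nat) (rho : 'Z_[p]) : Prop :=
  ~ exists x y : 'Z_[p], rho = x ^+ 2 + p%:R * y.

Definition core_matrix (p : nat) (rho : 'Z_[p]) (A0 : 'M['Z_[p]]_2) : Prop :=
  [\/ A0 = 1,
      exists (r : nat) (d : 'Z_[p]),
        (0 < r)%N /\ A0 = 1 + (p%:R ^+ r) *: mx22 0 d 1 0,
      exists (r : nat) (d : 'Z_[p]), A0 = mx22 0 d 1 (p%:R ^+ r) |
      exists r : nat,
        A0 = mx22 0 (p%:R ^+ r) 1 0 \/ A0 = mx22 0 (rho * p%:R ^+ r) 1 0].

From HB Require Import structures.
From mathcomp Require Import all_boot all_order all_algebra.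
From mathcomp Require Import boolp.
From mathcomp Require Import ring zify.
Set Implicit Arguments. Unset Strict Implicit. Unset Printing Implicit Defensive.
Import Order.TTheory GRing.Theory Num.Theory.
Local Open Scope ring_scope.

(* Every nonzero A is p^s A1 with A1 primitive (some entry a unit), and
   multiplicative similarity preserves s.  A primitive A1 that is not scalar
   modulo p has a cyclic vector, hence is conjugate to its companion matrix
   (0, -det; 1, tr); scaling by a unit then normalises a nonzero trace to p^r
   (type 3), or, when the trace vanishes, normalises the determinant to -p^r
   or -rho p^r, because for odd p every unit is a square or rho times a square
   (Hensel).  A primitive A1 that is scalar modulo p is a unit multiple of
   1 + p^r X with X traceless and not scalar modulo p, and X is cyclic again
   (type 2), unless A1 is scalar (type 1).  A nilpotent A1 has zero trace and
   determinant, so its companion matrix is (0, 0; 1, 0).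
   For uniqueness, a multiplicative similarity by u multiplies the trace by u
   and the determinant by u^2, and preserves being congruent to a scalar
   matrix modulo p^r; these invariants separate the types and then pin down
   their parameters, the classes of 1 and rho in Z_p^*/(Z_p^* )^2 being
   distinct. *)

Lemma modz_dvd (a d e : int) : (d %| e)%Z -> modz (modz a e) d = modz a d.
Proof. by move=> /dvdzP [q ->]; rewrite [in RHS](divz_eq a (q * d)) mulrA modzMDl. Qed.

Lemma unitr_neq0 (R : unitRingType) (x : R) : x \is a GRing.unit -> x != 0.
Proof. by apply: contraTneq => ->; rewrite unitr0. Qed.

Lemma finField_sqr_or_nonsqr_mul (F : finFieldType) (r a : F) :
  (2 : F) != 0 -> (forall x, r != x ^+ 2) -> a != 0 ->
  exists x, a = x ^+ 2 \/ a = r * x ^+ 2.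
Proof.
move=> h2 hr ha.
have r0 : r != 0 by have := hr 0; rewrite expr2 mul0r.
pose U := [set x : F | x != 0].
pose S := [set x ^+ 2 | x in U].
pose R := [set r * y | y in S].
have SU : S \subset U.
  by apply/subsetP => _ /imsetP [x hx ->]; rewrite /U !inE in hx *; apply: expf_neq0.
have RU : R \subset U.
  apply/subsetP => _ /imsetP [y hy ->]; have := subsetP SU y hy.
  by rewrite /U !inE => hy'; apply: mulf_neq0.
have dis : [disjoint S & R].
  apply/pred0P => y /=; apply/negP => /andP [/imsetP [x hx ->]].
  case/imsetP => _ /imsetP [w hw ->] e.
  rewrite /U inE in hw; apply: (negP (hr (x / w))); apply/eqP.
  by rewrite expr_div_n e mulfK //; apply: expf_neq0.
have cR : #|R| = #|S| by apply: card_imset; exact: mulfI.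
(* each nonzero square has at most the two square roots z and -z *)
have cU : (#|U| <= 2 * #|S|)%N.
  rewrite -sum1_card (partition_big_imset (fun x => x ^+ 2)) /= -/S.
  rewrite mulnC -sum_nat_const; apply: leq_sum => _ /imsetP [z hz ->].
  have -> : (\sum_(i in U | i ^+ 2 == z ^+ 2) 1)%N =
            #|[pred i in U | i ^+ 2 == z ^+ 2]| by rewrite -sum1_card.
  apply: leq_trans (_ : #|[set z; - z]| <= 2)%N; last by rewrite cards2; case: (_ != _).
  apply: subset_leq_card; apply/subsetP => i; rewrite !inE eqf_sqr.
  by case/andP.
have SRU : S :|: R = U.
  apply/eqP; rewrite eqEcard subUset SU RU /=.
  by rewrite cardsU disjoint_setI0 // cards0 subn0 cR addnn -mul2n.
have : a \in U by rewrite /U inE.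
rewrite -SRU inE => /orP [/imsetP [x _ ->] | /imsetP [y /imsetP [x _ ->] ->]];
  exists x; [left|right] => //.
Qed.

Section PadicIntegers.
Variable p : nat.
Hypothesis p_prime : prime p.
Local Notation Z := 'Z_[p].
Local Notation P := (p%:R : Z).

Lemma zpmodE n : zpmod p n = (p ^ n)%N%:Z.
Proof. by rewrite /zpmod (maxn_idPl _) // prime_gt1. Qed.

Lemma zpmod1 : zpmod p 1 = p%:Z.
Proof. by rewrite zpmodE expn1. Qed.

Lemma zpmodSp n : zpmod p n.+1 = zpmod p n * p%:Z.
Proof. by rewrite zpmodS (maxn_idPl (prime_gt1 p_prime)). Qed.

Lemma zpmod_dvd m n : (m <= n)%N -> (zpmod p m %| zpmod p n)%Z.
Proof. by move=> h; rewrite !zpmodE dvdzE /= dvdn_exp2l. Qed.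

Lemma zpval_ge0 (x : Z) n : 0 <= zpval x n.
Proof. by rewrite -zp_reduced modz_ge0 // zpmod_neq0. Qed.

Lemma zpval_lt (x : Z) n : zpval x n < zpmod p n.
Proof. by rewrite -zp_reduced ltz_pmod // zpmodE ltz_nat expn_gt0 prime_gt0. Qed.

Lemma zpvalD (x y : Z) n : zpval (x + y) n = modz (zpval x n + zpval y n) (zpmod p n).
Proof. by []. Qed.

Lemma zpvalM (x y : Z) n : zpval (x * y) n = modz (zpval x n * zpval y n) (zpmod p n).
Proof. by []. Qed.

Lemma zpvalN (x : Z) n : zpval (- x) n = modz (- zpval x n) (zpmod p n).
Proof. by []. Qed.

Lemma zpval0 n : zpval (0 : Z) n = 0.
Proof. exact: mod0z. Qed.

Lemma zpval_nat k n : zpval (k%:R : Z) n = modz k%:Z (zpmod p n).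
Proof.
elim: k => [|k IH]; first by rewrite zpval0 mod0z.
by rewrite -addn1 natrD zpvalD IH /= modzDm PoszD.
Qed.

Lemma zpval_leq (x : Z) m n : (m <= n)%N -> zpval x m = modz (zpval x n) (zpmod p m).
Proof.
elim: n => [|n IH]; first by rewrite leqn0 => /eqP ->; rewrite zp_reduced.
rewrite leq_eqVlt => /orP [/eqP -> | ]; first by rewrite zp_reduced.
by rewrite ltnS => h; rewrite (IH h) (zpvalP x n) modz_dvd // zpmod_dvd.
Qed.

(* [pXdvd n x] says that p ^ n divides x, i.e. x lies in the ideal p^n Z_p. *)
Definition pXdvd n (x : Z) := zpval x n = 0.

Lemma pXdvdD n (x y : Z) : pXdvd n x -> pXdvd n y -> pXdvd n (x + y).
Proof. by rewrite /pXdvd zpvalD => -> ->; rewrite mod0z. Qed.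

Lemma pXdvdMr n (x y : Z) : pXdvd n x -> pXdvd n (x * y).
Proof. by rewrite /pXdvd zpvalM => ->; rewrite mul0r mod0z. Qed.

Lemma pXdvdMl n (x y : Z) : pXdvd n y -> pXdvd n (x * y).
Proof. by rewrite mulrC; apply: pXdvdMr. Qed.

Lemma pXdvdN n (x : Z) : pXdvd n x -> pXdvd n (- x).
Proof. by rewrite /pXdvd zpvalN => ->; rewrite oppr0 mod0z. Qed.

Lemma pXdvdB n (x y : Z) : pXdvd n x -> pXdvd n y -> pXdvd n (x - y).
Proof. by move=> hx hy; apply/pXdvdD/pXdvdN. Qed.

Lemma pXdvd0 (x : Z) : pXdvd 0 x.
Proof.
rewrite /pXdvd; apply/eqP; rewrite eq_le zpval_ge0 andbT.
by have := zpval_lt x 0; rewrite zpmodE expn0 => h; lia.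
Qed.

Lemma pXdvd_pX n k : (n <= k)%N -> pXdvd n (P ^+ k).
Proof.
move=> h; rewrite /pXdvd -natrX zpval_nat zpmodE; apply/dvdz_mod0P.
by rewrite dvdzE /= dvdn_exp2l.
Qed.

Lemma pXdvd_eq0 (x : Z) : (forall n, pXdvd n x) -> x = 0.
Proof. by move=> h; apply: zp_eq => n; rewrite h zpval0. Qed.

Lemma pXdvd_zpval n (x y : Z) : pXdvd n (x - y) -> zpval x n = zpval y n.
Proof.
rewrite /pXdvd zpvalD zpvalN modzDmr => h.
by rewrite -zp_reduced -[zpval x n](subrK (zpval y n)) -modzDml h add0r zp_reduced.
Qed.

Lemma pXdvdSp n (y : Z) : pXdvd n y -> pXdvd n.+1 (P * y).
Proof.
move=> h; rewrite /pXdvd zpvalM zpval_nat modzMml.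
have : (zpmod p n %| zpval y n.+1)%Z by apply/dvdz_mod0P; rewrite -(zpvalP y n).
case/dvdzP => q ->; rewrite zpmodSp.
by rewrite mulrCA [(p%:Z) * _]mulrC modzMl.
Qed.

Lemma pXdvd1p (y : Z) : pXdvd 1 (P * y).
Proof. exact/pXdvdSp/pXdvd0. Qed.

Lemma zp_divp_cong (x : Z) n :
  (divz (zpval x n.+2) p%:Z = divz (zpval x n.+1) p%:Z %[mod zpmod p n])%Z.
Proof.
have p_neq0 : p%:Z != 0 by rewrite eqz_nat -lt0n prime_gt0.
set a := zpval x n.+2.
rewrite (zpvalP x n.+1) -/a {1}(divz_eq a (zpmod p n.+1)) zpmodSp.
by rewrite mulrA divzMDl // modzMDl.
Qed.

(* Division by p, exact on p Z_p (the residues are shifted down one level). *)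
Definition zp_divp (x : Z) : Z := @zp_red_of p _ (zp_divp_cong x).

Lemma zp_divpK (x : Z) : pXdvd 1 x -> x = P * zp_divp x.
Proof.
move=> h; apply: zp_eq => n; rewrite zpvalM zpval_nat /= modzMm.
have h1 : modz (zpval x n.+1) p%:Z = 0 by rewrite -zpmod1 -zpval_leq.
rewrite [in RHS]mulrC.
have -> : divz (zpval x n.+1) p%:Z * p%:Z = zpval x n.+1.
  by rewrite [in RHS](divz_eq (zpval x n.+1) p%:Z) h1 addr0.
exact: zpval_leq.
Qed.

Lemma zp_cauchy_lim (z : nat -> Z) : (forall n, pXdvd n (z n.+1 - z n)) ->
  exists x : Z, forall n, pXdvd n (x - z n).
Proof.
move=> h.
have gP n : (zpval (z n.+1) n.+1 = zpval (z n) n %[mod zpmod p n])%Z.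
  by rewrite -(zpvalP (z n.+1) n) zp_reduced; apply: pXdvd_zpval.
exists (@zp_red_of p _ gP) => n.
by rewrite /pXdvd zpvalD zpvalN modzDmr /= zp_reduced subrr mod0z.
Qed.

Definition zp_red (x : Z) : 'F_p := (zpval x 1)%:~R.

Lemma Fp_intr_mod (a : int) : ((modz a p%:Z)%:~R : 'F_p) = a%:~R.
Proof.
rewrite [in RHS](divz_eq a p%:Z) [in RHS]intrD [in RHS]intrM.
have -> : ((p%:Z)%:~R : 'F_p) = 0 by exact: (pchar_Fp_0 p_prime).
by rewrite mulr0 add0r.
Qed.

Lemma zp_redD (x y : Z) : zp_red (x + y) = zp_red x + zp_red y.
Proof. by rewrite /zp_red zpvalD zpmod1 Fp_intr_mod intrD. Qed.

Lemma zp_redM (x y : Z) : zp_red (x * y) = zp_red x * zp_red y.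
Proof. by rewrite /zp_red zpvalM zpmod1 Fp_intr_mod intrM. Qed.

Lemma zp_redB (x y : Z) : zp_red (x - y) = zp_red x - zp_red y.
Proof. by rewrite zp_redD /zp_red zpvalN zpmod1 Fp_intr_mod intrN. Qed.

Lemma zp_red_nat k : zp_red k%:R = k%:R.
Proof. by rewrite /zp_red zpval_nat zpmod1 Fp_intr_mod. Qed.

Lemma zp_redX (x : Z) k : zp_red (x ^+ k) = zp_red x ^+ k.
Proof.
elim: k => [|k IH]; first exact: (zp_red_nat 1).
by rewrite !exprS zp_redM IH.
Qed.

Lemma zp_red_eq0 (x : Z) : (zp_red x == 0) = (zpval x 1 == 0).
Proof.
rewrite /zp_red; have := zpval_ge0 x 1; have := zpval_lt x 1; rewrite zpmod1.
case: (zpval x 1) => // m; rewrite ltz_nat => hm _.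
rewrite /intmul -(dvdn_pcharf (pchar_Fp p_prime)).
by case: m hm => [|m] hm; [rewrite dvdn0 | rewrite gtnNdvd].
Qed.

Lemma zp_red_eq0P (x : Z) : reflect (pXdvd 1 x) (zp_red x == 0).
Proof. by rewrite zp_red_eq0; apply: eqP. Qed.

Definition zp_lift (a : 'F_p) : Z := (val a)%:R.

Lemma zp_liftK : cancel zp_lift zp_red.
Proof. by move=> a; rewrite /zp_lift zp_red_nat natr_Zp. Qed.

Lemma zp_unit_red (x : Z) : x \is a GRing.unit -> zp_red x != 0.
Proof.
move=> hx; apply/eqP => h0.
have := congr1 zp_red (mulVr hx); rewrite zp_redM h0 mulr0 (zp_red_nat 1) => /eqP.
by rewrite eq_sym oner_eq0.
Qed.

(* The inverse is the limit of the geometric series y0 (1 + e + e^2 + ...),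
   where y0 inverts x modulo p and e = 1 - x y0 lies in p Z_p. *)
Lemma zp_red_unit (x : Z) : zp_red x != 0 -> x \is a GRing.unit.
Proof.
move=> hx; set y0 := zp_lift (zp_red x)^-1; set e := 1 - x * y0.
have he : pXdvd 1 e.
  apply/zp_red_eq0P.
  by rewrite /e zp_redB zp_redM zp_liftK (zp_red_nat 1) mulfV // subrr.
have xy0 : x * y0 = 1 - e by rewrite /e opprB addrC subrK.
clearbody e; have eE := zp_divpK he.
pose z := fix z k := if k is k'.+1 then z k' + y0 * e ^+ k else y0.
have hz k : x * z k = 1 - e ^+ k.+1.
  elim: k => [|k IH] /=; first by rewrite expr1.
  rewrite mulrDr IH mulrA xy0.
  by rewrite [in RHS]exprS [e ^+ k.+1]exprS mulrBl mul1r addrA subrK.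
have [y hy] : exists y, forall n, pXdvd n (y - z n).
  apply: zp_cauchy_lim => n /=; rewrite addrAC subrr add0r eE exprMn.
  by apply/pXdvdMl/pXdvdMr/pXdvd_pX.
apply/unitrPr; exists y; apply/eqP; rewrite -subr_eq0; apply/eqP/pXdvd_eq0 => n.
have -> : x * y - 1 = x * (y - z n) + (x * z n - 1) by ring.
rewrite hz addrAC subrr add0r eE exprMn; apply: pXdvdD; first exact: pXdvdMl.
by apply/pXdvdN/pXdvdMr/pXdvd_pX.
Qed.

Lemma zp_unitE (x : Z) : (x \is a GRing.unit) = (zp_red x != 0).
Proof. by apply/idP/idP => [/zp_unit_red | /zp_red_unit]. Qed.

Lemma zp_nunitP (x : Z) : reflect (pXdvd 1 x) (x \isn't a GRing.unit).
Proof. by rewrite zp_unitE negbK; apply: zp_red_eq0P. Qed.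

Lemma zp_nunitD (x y : Z) :
  x \isn't a GRing.unit -> y \isn't a GRing.unit -> x + y \isn't a GRing.unit.
Proof. by move=> /zp_nunitP hx /zp_nunitP hy; apply/zp_nunitP/pXdvdD. Qed.

Lemma zp_nunitN (x : Z) : x \isn't a GRing.unit -> - x \isn't a GRing.unit.
Proof. by rewrite unitrN. Qed.

Lemma zp_nunitB (x y : Z) :
  x \isn't a GRing.unit -> y \isn't a GRing.unit -> x - y \isn't a GRing.unit.
Proof. by move=> hx hy; rewrite zp_nunitD ?zp_nunitN. Qed.

Lemma zp_nunitMr (x y : Z) : x \isn't a GRing.unit -> x * y \isn't a GRing.unit.
Proof. by move=> /zp_nunitP hx; apply/zp_nunitP/pXdvdMr. Qed.

Lemma zp_nunitp (y : Z) : P * y \isn't a GRing.unit.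
Proof. exact/zp_nunitP/pXdvd1p. Qed.

Lemma zp_unitD_nunit (x y : Z) :
  x \is a GRing.unit -> y \isn't a GRing.unit -> x + y \is a GRing.unit.
Proof. by move=> hx hy; apply: contraTT hx => h; rewrite -(addrK y x) zp_nunitB. Qed.

Lemma pX_neq0 k : P ^+ k != 0.
Proof.
apply/eqP => /(congr1 (fun x => zpval x k.+1)).
rewrite /= -natrX zpval_nat mod0z zpmodE modz_nat modn_small; last first.
  by rewrite ltn_exp2l // prime_gt1.
by have := expn_gt0 p k; rewrite (prime_gt0 p_prime) /= => h1 h2; lia.
Qed.

Lemma zp_valuation (x : Z) : x != 0 -> exists k u, u \is a GRing.unit /\ x = P ^+ k * u.
Proof.
move=> hx; have [n hn] : exists n, ~ pXdvd n x.
  apply: contrapT => h; apply/(negP hx)/eqP/pXdvd_eq0 => n.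
  by apply: contrapT => hn; apply: h; exists n.
elim: n x hn {hx} => [|n IH] x hn; first by case: hn; exact: pXdvd0.
have [xu|/zp_nunitP x1] := boolP (x \is a GRing.unit).
  by exists 0%N, x; rewrite expr0 mul1r.
have xE := zp_divpK x1.
have [k [u [hu dE]]] : exists k u, u \is a GRing.unit /\ zp_divp x = P ^+ k * u.
  by apply: IH => hI; apply: hn; rewrite xE; exact: pXdvdSp.
by exists k.+1, u; split => //; rewrite xE dE exprS mulrA.
Qed.

Lemma zp_mul_eq0 (x y : Z) : x * y = 0 -> x = 0 \/ y = 0.
Proof.
move=> h; have [->|hx] := eqVneq x 0; [by left|]; have [->|hy] := eqVneq y 0; [by right|].
have [a [u [hu xE]]] := zp_valuation hx; have [b [v [hv yE]]] := zp_valuation hy.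
have huv : u * v \is a GRing.unit by rewrite unitrM hu hv.
have e : x * y = P ^+ (a + b) * (u * v) by rewrite xE yE exprD; ring.
by move: (pX_neq0 (a + b)); rewrite -(mulrK huv (P ^+ (a + b))) -e h mul0r eqxx.
Qed.

Lemma zp_mulfI (x y z : Z) : x != 0 -> x * y = x * z -> y = z.
Proof.
move=> hx e; have : x * (y - z) = 0 by rewrite mulrBr e subrr.
case/zp_mul_eq0 => [/eqP|/eqP]; first by rewrite (negbTE hx).
by rewrite subr_eq0 => /eqP.
Qed.

Lemma zp_expf_eq0 (x : Z) k : x ^+ k = 0 -> x = 0.
Proof.
elim: k => [|k IH]; first by move/eqP; rewrite oner_eq0.
by rewrite exprS => /zp_mul_eq0 [//|/IH].
Qed.

Lemma zp_val_leq a b (y z : Z) :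
  P ^+ a * y = P ^+ b * z -> y \is a GRing.unit -> (b <= a)%N.
Proof.
move=> e hu; rewrite leqNgt; apply/negP => hlt.
have [k bE] : exists k, b = (a + k.+1)%N by exists (b - a.+1)%N; lia.
have yE : y = P * (P ^+ k * z).
  apply: (zp_mulfI (pX_neq0 a)).
  by rewrite e bE exprD exprS !mulrA.
by move: hu; rewrite yE; apply/negP; exact: zp_nunitp.
Qed.

Lemma zp_val_uniq a b (u v : Z) : u \is a GRing.unit -> v \is a GRing.unit ->
  P ^+ a * u = P ^+ b * v -> a = b.
Proof.
move=> hu hv e; apply/eqP; rewrite eqn_leq.
by rewrite (zp_val_leq (esym e) hv) (zp_val_leq e hu).
Qed.

Hypothesis p_odd : odd p.

Lemma Fp_two_neq0 : (2 : 'F_p) != 0.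
Proof.
rewrite -(dvdn_pcharf (pchar_Fp p_prime) 2); apply/negP => /(dvdn_leq (isT : (0 < 2)%N)).
by have := prime_gt1 p_prime; move: p_odd; case: (p) => [|[|[|]]].
Qed.

Lemma zp_unit2 : (2 : Z) \is a GRing.unit.
Proof. by rewrite zp_unitE (zp_red_nat 2) Fp_two_neq0. Qed.

Lemma zp_sqr_modp (rho : Z) : nonsquare_mod_p rho -> forall w : Z, w \is a GRing.unit ->
  exists x0 : Z, x0 \is a GRing.unit /\
    (pXdvd 1 (w - x0 ^+ 2) \/ pXdvd 1 (w - rho * x0 ^+ 2)).
Proof.
move=> hns w hw.
have [x hx] : exists x, zp_red w = x ^+ 2 \/ zp_red w = zp_red rho * x ^+ 2.
  apply: finField_sqr_or_nonsqr_mul; [exact: Fp_two_neq0 | | exact: zp_unit_red].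
  move=> x; apply/eqP => e; apply: hns; exists (zp_lift x), (zp_divp (rho - zp_lift x ^+ 2)).
  have h : pXdvd 1 (rho - zp_lift x ^+ 2).
    by apply/zp_red_eq0P; rewrite zp_redB zp_redX zp_liftK e subrr.
  by rewrite -(zp_divpK h) addrC subrK.
exists (zp_lift x); split.
  rewrite zp_unitE zp_liftK; apply: contraTneq (zp_unit_red hw) => x0.
  by case: hx => ->; rewrite x0 expr2 !mul0r ?mulr0 eqxx.
case: hx => e; [left|right]; apply/zp_red_eq0P.
  by rewrite zp_redB zp_redX zp_liftK e subrr.
by rewrite zp_redB zp_redM zp_redX zp_liftK e subrr.
Qed.

(* Newton iteration z_{k+1} = z_k + (w - z_k^2) / (2 x0): the defect
   w - z_k^2 gains a factor p at each step. *)
Lemma zp_hensel_sqrt (w x0 : Z) : x0 \is a GRing.unit -> pXdvd 1 (w - x0 ^+ 2) ->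
  exists x, w = x ^+ 2.
Proof.
move=> hx0 h1; set c := (2 * x0)^-1.
have hc : 2 * x0 * c = 1 by rewrite mulrV // unitrM zp_unit2 hx0.
pose z := fix z k := if k is k'.+1 then z k' + (w - z k' ^+ 2) * c else x0.
have inv k : (exists a, z k = x0 + P * a) /\ (exists f, w - z k ^+ 2 = P ^+ k.+1 * f).
  elim: k => [|k [[a za] [f zf]]] /=.
    split; first by exists 0; rewrite mulr0 addr0.
    by exists (zp_divp (w - x0 ^+ 2)); rewrite expr1 -zp_divpK.
  split; first by exists (a + P ^+ k * f * c); rewrite zf za exprS; ring.
  exists (- (2 * a * c * f) - P ^+ k * f ^+ 2 * c ^+ 2).
  have wE : w = z k ^+ 2 + P ^+ k.+1 * f by rewrite -zf addrC subrK.
  rewrite zf {1}wE za.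
  transitivity (P ^+ k.+2 * (- (2 * a * c * f) - P ^+ k * f ^+ 2 * c ^+ 2) +
     P ^+ k.+1 * f * (1 - 2 * x0 * c)); first by rewrite !exprS; ring.
  by rewrite hc subrr mulr0 addr0.
have [x hx] : exists x, forall n, pXdvd n (x - z n).
  apply: zp_cauchy_lim => n /=; rewrite addrAC subrr add0r; have [_ [f ->]] := inv n.
  by apply/pXdvdMr/pXdvdMr/pXdvd_pX.
exists x; apply/eqP; rewrite -subr_eq0; apply/eqP/pXdvd_eq0 => n.
have [_ [f zf]] := inv n.
have -> : w - x ^+ 2 = (w - z n ^+ 2) - (x - z n) * (x + z n) by ring.
by rewrite zf; apply: pXdvdB; [apply/pXdvdMr/pXdvd_pX | exact/pXdvdMr].
Qed.

Lemma zp_unit_sqr_classes (rho : Z) : nonsquare_mod_p rho -> rho \is a GRing.unit ->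
  forall w : Z, w \is a GRing.unit ->
  exists x : Z, x \is a GRing.unit /\ (w = x ^+ 2 \/ w = rho * x ^+ 2).
Proof.
move=> hns hr w hw; have [x0 [hx0 [h|h]]] := zp_sqr_modp hns hw.
  have [x xE] := zp_hensel_sqrt hx0 h; exists x; split; last by left.
  by rewrite -(unitrX_pos _ (isT : (0 < 2)%N)) -xE.
have h' : pXdvd 1 (w / rho - x0 ^+ 2).
  have -> : w / rho - x0 ^+ 2 = (w - rho * x0 ^+ 2) * rho^-1.
    by rewrite mulrBl [rho * _]mulrC mulrK.
  exact: pXdvdMr.
have [x xE] := zp_hensel_sqrt hx0 h'; exists x; split.
  by rewrite -(unitrX_pos _ (isT : (0 < 2)%N)) -xE unitrM hw unitrV.
by right; rewrite -xE mulrC divrK.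
Qed.

End PadicIntegers.

Section Matrix22.
Variable R : comNzRingType.
Implicit Types a b c d k : R.

Lemma mx22E (A : 'M[R]_2) : A = mx22 (A 0 0) (A 0 1) (A 1 0) (A 1 1).
Proof.
apply/matrixP => i j; rewrite !mxE.
by case: i => [[|[|//]]] ?; case: j => [[|[|//]]] ? /=; congr (A _ _); apply: val_inj.
Qed.

Lemma mx22_inj a b c d a' b' c' d' : mx22 a b c d = mx22 a' b' c' d' ->
  [/\ a = a', b = b', c = c' & d = d'].
Proof.
move=> e; have f i j := congr1 (fun M : 'M[R]_2 => M i j) e.
by have := f 0 0; have := f 0 1; have := f 1 0; have := f 1 1; rewrite !mxE /=.
Qed.

Lemma mx22_mul a b c d a' b' c' d' :
  mx22 a b c d *m mx22 a' b' c' d' =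
  mx22 (a * a' + b * c') (a * b' + b * d') (c * a' + d * c') (c * b' + d * d').
Proof.
apply/matrixP => i j; rewrite !mxE !big_ord_recl big_ord0 !mxE /=.
by case: i => [[|[|//]]] ?; case: j => [[|[|//]]] ? /=; rewrite addr0.
Qed.

Lemma mx22Z k a b c d : k *: mx22 a b c d = mx22 (k * a) (k * b) (k * c) (k * d).
Proof.
apply/matrixP => i j; rewrite !mxE.
by case: i => [[|[|//]]] ?; case: j => [[|[|//]]] ? /=.
Qed.

Lemma mx22D a b c d a' b' c' d' :
  mx22 a b c d + mx22 a' b' c' d' = mx22 (a + a') (b + b') (c + c') (d + d').
Proof.
apply/matrixP => i j; rewrite !mxE.
by case: i => [[|[|//]]] ?; case: j => [[|[|//]]] ? /=.
Qed.

Lemma scalar_mx22 k : k%:M = mx22 k 0 0 k :> 'M[R]_2.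
Proof.
apply/matrixP => i j; rewrite !mxE.
by case: i => [[|[|//]]] ?; case: j => [[|[|//]]] ? /=.
Qed.

Lemma mx22_1 : 1 = mx22 1 0 0 1 :> 'M[R]_2.
Proof. exact: scalar_mx22. Qed.

Lemma mx22_0 : 0 = mx22 0 0 0 0 :> 'M[R]_2.
Proof. by rewrite -scalar_mx22 raddf0. Qed.

Lemma det_mx22 a b c d : \det (mx22 a b c d) = a * d - b * c.
Proof.
rewrite (expand_det_row _ 0) !big_ord_recl big_ord0 /cofactor !det_mx11 !mxE /=.
by rewrite expr0 expr1; ring.
Qed.

Lemma tr_mx22 a b c d : \tr (mx22 a b c d) = a + d.
Proof. by rewrite /mxtrace !big_ord_recl big_ord0 !mxE /= addr0. Qed.

(* Cayley-Hamilton for a singular 2x2 matrix. *)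
Lemma mx22_det0_sqr a b c d : a * d - b * c = 0 ->
  mx22 a b c d *m mx22 a b c d = (a + d) *: mx22 a b c d.
Proof.
move/eqP; rewrite subr_eq0 => /eqP bc.
rewrite mx22_mul mx22Z; congr mx22; try ring.
- by rewrite -bc; ring.
- by rewrite [c * b]mulrC -bc; ring.
Qed.

Lemma mx22_det0_expS a b c d n : a * d - b * c = 0 ->
  mx22 a b c d ^+ n.+1 = (a + d) ^+ n *: mx22 a b c d.
Proof.
move=> hdet; elim: n => [|n IH]; first by rewrite expr1 expr0 scale1r.
by rewrite exprSr IH -mulmxE -scalemxAl (mx22_det0_sqr hdet) scalerA -exprSr.
Qed.

Lemma det_mxX n (A : 'M[R]_n) (k : nat) : \det (A ^+ k) = \det A ^+ k.
Proof.
elim: k => [|k IH]; first by rewrite !expr0 det1.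
by rewrite !exprS -mulmxE det_mulmx IH.
Qed.

End Matrix22.

Section MultSimilar.
Variable R : comUnitRingType.
Local Notation M := 'M[R]_2.

Lemma mult_similar_intro (A A' B : M) u : u \is a GRing.unit -> B \in unitmx ->
  u *: (A *m B) = B *m A' -> mult_similar A A'.
Proof.
move=> hu hB e; exists u, B; split => //.
by rewrite -[A'](mulKmx hB) -e -scalemxAr mulmxA.
Qed.

Lemma mult_similar_elim (A A' : M) : mult_similar A A' ->
  exists u B, [/\ u \is a GRing.unit, B \in unitmx & u *: (A *m B) = B *m A'].
Proof.
move=> [u [B [hu hB ->]]]; exists u, B; split => //.
by rewrite -scalemxAr !mulmxA mulmxV // mul1mx.
Qed.

Lemma mult_similar_refl (A : M) : mult_similar A A.
Proof. by apply: (@mult_similar_intro _ _ 1 1); rewrite ?unitr1 ?unitmx1 // scale1r mulmx1 mul1mx. Qed.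

Lemma mult_similar_sym (A A' : M) : mult_similar A A' -> mult_similar A' A.
Proof.
move=> /mult_similar_elim [u [B [hu hB e]]].
apply: (@mult_similar_intro _ _ (invmx B) u^-1); rewrite ?unitrV ?unitmx_inv //.
apply: (canRL (mulKmx hB)); rewrite -scalemxAr mulmxA -e -scalemxAl.
by rewrite scalerA mulVr // scale1r -mulmxA mulmxV // mulmx1.
Qed.

Lemma mult_similar_trans (A A' A'' : M) :
  mult_similar A A' -> mult_similar A' A'' -> mult_similar A A''.
Proof.
move=> /mult_similar_elim [u [B [hu hB e]]] /mult_similar_elim [v [C [hv hC f]]].
apply: (@mult_similar_intro _ _ (B *m C) (u * v)); rewrite ?unitrM ?unitmx_mul ?hu ?hv ?hB //.
by rewrite mulrC -scalerA mulmxA scalemxAl e -!mulmxA scalemxAr f.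
Qed.

Lemma mult_similar_invariants (A A' : M) : mult_similar A A' ->
  exists u, [/\ u \is a GRing.unit, \tr A' = u * \tr A, \det A' = u ^+ 2 * \det A &
   forall (lam c : R) (X : M), A = lam%:M + c *: X ->
     exists X' : M, A' = (u * lam)%:M + c *: X'].
Proof.
move=> [u [B [hu hB ->]]]; exists u; split => //.
- by rewrite mxtraceZ -mulmxA mxtrace_mulC -mulmxA mulmxV // mulmx1.
- by rewrite detZ !det_mulmx det_inv [(_ * \det A) * _]mulrAC mulVr ?mul1r.
- move=> lam c X ->; exists (u *: (invmx B *m X *m B)).
  rewrite mulmxDr mulmxDl mul_mx_scalar -scalemxAl mulVmx // scalemx1.
  rewrite -!scalemxAr -!scalemxAl scalerDr scale_scalar_mx.
  by rewrite !scalerA [u * c]mulrC.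
Qed.

Lemma mult_similar_offdiag (A A' : M) lam c X i j : mult_similar A A' ->
  A = lam%:M + c *: X -> i != j -> exists y, A' i j = c * y.
Proof.
move=> /mult_similar_invariants [u [_ _ _ hshift]] /hshift [X' ->] hij.
by exists (X' i j); rewrite !mxE (negbTE hij) add0r.
Qed.

Lemma mult_similar0 (A' : M) : mult_similar 0 A' -> A' = 0.
Proof. by move=> [u [B [_ _ ->]]]; rewrite mulmx0 mul0mx scaler0. Qed.

Lemma mult_similar1 (A' : M) : mult_similar 1 A' -> exists u, A' = u%:M.
Proof.
move=> [u [B [_ hB ->]]]; exists u.
by rewrite mulmx1 mulVmx // scalemx1.
Qed.

Lemma exists_unique_mult_similar (F : M -> Prop) (A : M) :
  (exists A', F A' /\ mult_similar A A') ->
  (forall A1 A2, F A1 -> F A2 -> mult_similar A1 A2 -> A1 = A2) ->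
  exists! A', F A' /\ mult_similar A A'.
Proof.
move=> [A' [hF hA']] huniq; exists A'; split => // A'' [hF' hA''].
exact: huniq hF hF' (mult_similar_trans (mult_similar_sym hA') hA'').
Qed.

End MultSimilar.

Section PadicMatrices.
Variable p : nat.
Hypothesis p_prime : prime p.
Local Notation Z := 'Z_[p].
Local Notation P := (p%:R : Z).
Local Notation M := 'M[Z]_2.

Definition primitive_mx m n (A : 'M[Z]_(m, n)) := exists i j, A i j \is a GRing.unit.

Lemma mx_content_decomp m n (A : 'M[Z]_(m, n)) : A != 0 ->
  exists s (A1 : 'M[Z]_(m, n)), primitive_mx A1 /\ A = P ^+ s *: A1.
Proof.
move=> hA; have [k hk] : exists k, ~ (forall i j, pXdvd k (A i j)).
  apply: contrapT => h; apply/(negP hA)/eqP/matrixP => i j; rewrite mxE.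
  by apply: pXdvd_eq0 => k; apply: contrapT => hk; apply: h; exists k => H; apply: hk.
elim: k A hk {hA} => [|k IH] A hk; first by case: hk => i j; exact: (pXdvd0 p_prime).
have [hp|hp] := pselect (primitive_mx A); first by exists 0%N, A; rewrite expr0 scale1r.
have hI i j : pXdvd 1 (A i j).
  by apply/(zp_nunitP p_prime)/negP => hu; apply: hp; exists i, j.
set A' := map_mx (@zp_divp p p_prime) A.
have AE : A = P *: A' by apply/matrixP => i j; rewrite !mxE; exact: (zp_divpK p_prime).
have [s [A1 [h1 e1]]] : exists s (A1 : 'M[Z]_(m, n)), primitive_mx A1 /\ A' = P ^+ s *: A1.
  by apply: IH => H; apply: hk => i j; rewrite AE mxE; exact: (pXdvdSp p_prime).
by exists s.+1, A1; split => //; rewrite AE e1 scalerA exprS.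
Qed.

Lemma zp_scalemx_inj m n (c : Z) (X Y : 'M[Z]_(m, n)) : c != 0 -> c *: X = c *: Y -> X = Y.
Proof.
move=> hc e; apply/matrixP => i j; have := congr1 (fun N : 'M[Z]_(m, n) => N i j) e.
by rewrite !mxE; exact: (zp_mulfI p_prime).
Qed.

Lemma primitive_content_leq m n a b (Y W : 'M[Z]_(m, n)) :
  P ^+ a *: Y = P ^+ b *: W -> primitive_mx Y -> (b <= a)%N.
Proof.
move=> /matrixP e [i [j hu]].
by have := e i j; rewrite !mxE => /(zp_val_leq p_prime); apply.
Qed.

Lemma mult_similar_content_leq s t (Y W : M) :
  mult_similar (P ^+ s *: Y) (P ^+ t *: W) -> primitive_mx W -> (s <= t)%N.
Proof.
move=> /mult_similar_invariants [u [_ _ _ hshift]] hW.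
have e0 : P ^+ s *: Y = 0%:M + P ^+ s *: Y by rewrite raddf0 add0r.
have [X' e] := hshift 0 (P ^+ s) Y e0.
by move: e; rewrite mulr0 raddf0 add0r => /primitive_content_leq; apply.
Qed.

Lemma mult_similar_content_eq s t (Y W : M) : mult_similar (P ^+ s *: Y) (P ^+ t *: W) ->
  primitive_mx Y -> primitive_mx W -> s = t.
Proof.
move=> h hY hW; apply/eqP; rewrite eqn_leq.
by rewrite (mult_similar_content_leq h hW) (mult_similar_content_leq (mult_similar_sym h) hY).
Qed.

Lemma mult_similar_pXZ s (Y W : M) :
  mult_similar (P ^+ s *: Y) (P ^+ s *: W) -> mult_similar Y W.
Proof.
move=> [u [B [hu hB e]]]; exists u, B; split; [exact: hu | exact: hB |].
apply: (zp_scalemx_inj (pX_neq0 p_prime s)).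
rewrite e -scalemxAr -scalemxAl !scalerA; congr (_ *: _); exact: mulrC.
Qed.

Lemma mult_similar_pXZ_conj (A A1 B C : M) s (v : Z) : v \is a GRing.unit ->
  B \in unitmx -> A = P ^+ s *: A1 -> (v *: A1) *m B = B *m C ->
  mult_similar A (P ^+ s *: C).
Proof.
move=> hv hB -> e; apply: (mult_similar_intro hv hB).
rewrite -scalemxAr -e -!scalemxAl !scalerA; congr (_ *: _); exact: mulrC.
Qed.

Lemma primitive_mx22 (a b c d : Z) : primitive_mx (mx22 a b c d) ->
  ~ [/\ a \isn't a GRing.unit, b \isn't a GRing.unit, c \isn't a GRing.unit &
        d \isn't a GRing.unit].
Proof.
move=> [i [j]]; rewrite mxE => hu [ha hb hc hd]; move: hu.
by case: i => [[|[|//]]] ?; case: j => [[|[|//]]] ? /=; apply/negP.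
Qed.

Lemma mx22_content_decomp (A : M) : A != 0 -> exists s (a b c d : Z),
  primitive_mx (mx22 a b c d) /\ A = P ^+ s *: mx22 a b c d.
Proof.
move=> /mx_content_decomp [s [A1 [hA1 ->]]].
by exists s, (A1 0 0), (A1 0 1), (A1 1 0), (A1 1 1); rewrite -mx22E.
Qed.

Definition mx22_scalar_modp (a b c d : Z) :=
  [/\ b \isn't a GRing.unit, c \isn't a GRing.unit & d - a \isn't a GRing.unit].

Lemma primitive_scalar_modp_unit (a b c d : Z) : primitive_mx (mx22 a b c d) ->
  mx22_scalar_modp a b c d -> a \is a GRing.unit.
Proof.
move=> hp [hb hc hda]; apply: contraT => ha; case: (primitive_mx22 hp); split => //.
by rewrite -(subrK a d) (zp_nunitD p_prime).
Qed.

(* A matrix that is not scalar modulo p has a cyclic vector: e_1, e_2 or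
   e_1 + e_2, according to which of c, b, d - a is a unit. *)
Lemma mx22_companion_similar (a b c d : Z) : ~ mx22_scalar_modp a b c d ->
  exists B : M, B \in unitmx /\
    mx22 a b c d *m B = B *m mx22 0 (- (a * d - b * c)) 1 (a + d).
Proof.
move=> h.
have [hc|hc] := boolP (c \is a GRing.unit).
  exists (mx22 1 a 0 c); split; first by rewrite unitmxE det_mx22 mul1r mulr0 subr0.
  by rewrite !mx22_mul; congr mx22; ring.
have [hb|hb] := boolP (b \is a GRing.unit).
  exists (mx22 0 b 1 d); split; first by rewrite unitmxE det_mx22 mul0r sub0r mulr1 unitrN.
  by rewrite !mx22_mul; congr mx22; ring.
have [hda|hda] := boolP ((d - a) \is a GRing.unit); last by case: h.
exists (mx22 1 (a + b) 1 (c + d)); split.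
  rewrite unitmxE det_mx22 mul1r mulr1.
  have -> : c + d - (a + b) = (d - a) + (c - b) by ring.
  by apply: (zp_unitD_nunit p_prime) => //; apply: (zp_nunitB p_prime).
by rewrite !mx22_mul; congr mx22; ring.
Qed.

Lemma mx22_companion_similarZ (a b c d v : Z) : v \is a GRing.unit ->
  ~ mx22_scalar_modp a b c d ->
  exists B : M, B \in unitmx /\ (v *: mx22 a b c d) *m B =
    B *m mx22 0 (- (v ^+ 2 * (a * d - b * c))) 1 (v * (a + d)).
Proof.
move=> hv hns.
have hns' : ~ mx22_scalar_modp (v * a) (v * b) (v * c) (v * d).
  by rewrite /mx22_scalar_modp -mulrBr !unitrMr.
have [B [hB e]] := mx22_companion_similar hns'; exists B; split => //.
rewrite mx22Z e; congr (_ *m mx22 _ _ _ _); ring.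
Qed.

End PadicMatrices.

Section NormalForms.
Variable p : nat.
Hypothesis p_prime : prime p.
Hypothesis p_odd : odd p.
Variable rho : 'Z_[p].
Hypothesis rho_unit : rho \is a GRing.unit.
Hypothesis rho_nsq : nonsquare_mod_p rho.
Local Notation Z := 'Z_[p].
Local Notation P := (p%:R : Z).
Local Notation M := 'M[Z]_2.

Definition nilpotent_normal_form (M0 : M) :=
  M0 = 0 \/ exists s, M0 = P ^+ s *: mx22 0 0 1 0.

Definition core_normal_form (M0 : M) :=
  exists s (A0 : M), core_matrix rho A0 /\ M0 = P ^+ s *: A0.

Lemma core_similar_trace_neq0 (A : M) s (a b c d : Z) :
  A = P ^+ s *: mx22 a b c d -> ~ mx22_scalar_modp a b c d -> a + d != 0 ->
  exists M0, core_normal_form M0 /\ mult_similar A M0.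
Proof.
move=> AE hns /(zp_valuation p_prime) [r [w [hw tE]]].
have hv : w^-1 \is a GRing.unit by rewrite unitrV.
have [B [hB e]] := mx22_companion_similarZ p_prime hv hns.
set d0 := - (w^-1 ^+ 2 * (a * d - b * c)) in e.
exists (P ^+ s *: mx22 0 d0 1 (P ^+ r)); split.
  exists s, (mx22 0 d0 1 (P ^+ r)); split; last reflexivity.
  by apply: Or43; exists r, d0.
apply: (mult_similar_pXZ_conj hv hB AE).
by rewrite e tE mulrCA mulVr ?mulr1.
Qed.

(* The unit part of - det is a square or rho times a square; scaling by the
   inverse square root kills it. *)
Lemma core_similar_trace0 (A : M) s (a b c d : Z) :
  A = P ^+ s *: mx22 a b c d -> ~ mx22_scalar_modp a b c d -> a + d = 0 ->
  a * d - b * c != 0 -> exists M0, core_normal_form M0 /\ mult_similar A M0.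
Proof.
move=> AE hns ht hdet.
have [r [w [hw dE]]] : exists r w, w \is a GRing.unit /\ - (a * d - b * c) = P ^+ r * w.
  by apply: (zp_valuation p_prime); rewrite oppr_eq0.
have [x [hx wE]] := zp_unit_sqr_classes p_prime p_odd rho_nsq rho_unit hw.
have hv : x^-1 \is a GRing.unit by rewrite unitrV.
have [B [hB e]] := mx22_companion_similarZ p_prime hv hns.
have d0E : - (x^-1 ^+ 2 * (a * d - b * c)) = P ^+ r * w / x ^+ 2.
  by rewrite -mulrN dE exprVn mulrC.
rewrite ht mulr0 d0E in e.
have hx2 : x ^+ 2 \is a GRing.unit by rewrite unitrX.
have [e0 [he0 we0]] : exists e0, (e0 = 1 \/ e0 = rho) /\ P ^+ r * w / x ^+ 2 = e0 * P ^+ r.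
  case: wE => ->; [exists 1 | exists rho]; split; try by [left | right].
    by rewrite mulrK // mul1r.
  by rewrite mulrA mulrK // mulrC.
rewrite we0 in e.
exists (P ^+ s *: mx22 0 (e0 * P ^+ r) 1 0); split.
  exists s, (mx22 0 (e0 * P ^+ r) 1 0); split; last reflexivity; apply: Or44; exists r.
  by case: he0 => ->; [left; rewrite mul1r | right].
exact: (mult_similar_pXZ_conj hv hB AE e).
Qed.

(* Write A1 = a + (0, b; c, d - a) = a + p^r C with C primitive; centring C
   by half its trace gives v A1 = 1 + p^r X with X traceless and primitive. *)
Lemma scalar_modp_decomp (a b c d : Z) : primitive_mx (mx22 a b c d) ->
  mx22_scalar_modp a b c d -> mx22 0 b c (d - a) != 0 ->
  exists (v : Z) (r : nat) (e f g : Z), [/\ v \is a GRing.unit, (0 < r)%N,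
    ~ mx22_scalar_modp (- e) f g e &
    v *: mx22 a b c d = 1 + P ^+ r *: mx22 (- e) f g e].
Proof.
move=> hp hns /(mx22_content_decomp p_prime) [r [c1 [c2 [c3 [c4 [hC]]]]]].
rewrite mx22Z => /mx22_inj [c1E bE cE daE].
have ha := primitive_scalar_modp_unit p_prime hp hns.
have c10 : c1 = 0.
  by case: (zp_mul_eq0 p_prime (esym c1E)) => // /eqP; rewrite (negbTE (pX_neq0 p_prime r)).
have [hb hc hda] := hns.
case: r bE cE daE {c1E} => [|r] bE cE daE.
  rewrite expr0 !mul1r in bE cE daE.
  by case: (primitive_mx22 hC); rewrite c10 unitr0 -bE -cE -daE.
set h := c4 / 2.
have c4E : c4 = h + h by rewrite -mulr2n -mulr_natr /h divrK // (zp_unit2 p_prime p_odd).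
set q := a + P ^+ r.+1 * h.
have hq : q \is a GRing.unit.
  by apply: (zp_unitD_nunit p_prime ha); rewrite exprS -mulrA (zp_nunitp p_prime).
exists q^-1, r.+1, (q^-1 * h), (q^-1 * c2), (q^-1 * c3); split.
- by rewrite unitrV.
- by [].
- rewrite /mx22_scalar_modp opprK -mulrDr -c4E !unitrMr ?unitrV // => -[h2 h3 h4].
  by case: (primitive_mx22 hC); rewrite c10 unitr0; split.
- rewrite mx22Z mx22_1 mx22Z mx22D; congr mx22.
  + by rewrite -[X in _ = X + _](mulVr hq) /q; ring.
  + by rewrite bE; ring.
  + by rewrite cE; ring.
  + have dE : d = a + P ^+ r.+1 * c4 by rewrite -daE addrC subrK.
    by rewrite -[X in _ = X + _](mulVr hq) dE c4E /q; ring.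
Qed.

Lemma core_similar_scalar_modp (A : M) s (a b c d : Z) :
  A = P ^+ s *: mx22 a b c d -> primitive_mx (mx22 a b c d) ->
  mx22_scalar_modp a b c d -> exists M0, core_normal_form M0 /\ mult_similar A M0.
Proof.
move=> AE hp hns; have [hX|hX] := eqVneq (mx22 0 b c (d - a)) 0.
  move: hX; rewrite mx22_0 => /mx22_inj [_ b0 c0 /eqP]; rewrite subr_eq0 => /eqP dE.
  exists (P ^+ s *: 1); split; first by exists s, 1; split; last reflexivity; apply: Or41.
  have ha := primitive_scalar_modp_unit p_prime hp hns.
  have hai : a^-1 \is a GRing.unit by rewrite unitrV.
  apply: (mult_similar_pXZ_conj hai (unitmx1 _ _) AE).
  by rewrite mulmx1 mul1mx mx22Z b0 c0 dE mulr0 mulVr // mx22_1.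
have [v [r [e [f [g [hv hr hns' vE]]]]]] := scalar_modp_decomp hp hns hX.
have [B [hB hBE]] := mx22_companion_similar p_prime hns'.
rewrite addNr in hBE; set d0 := - (- e * e - f * g) in hBE.
exists (P ^+ s *: (1 + P ^+ r *: mx22 0 d0 1 0)); split.
  exists s, (1 + P ^+ r *: mx22 0 d0 1 0); split; last reflexivity.
  by apply: Or42; exists r, d0; split; last reflexivity.
apply: (mult_similar_pXZ_conj hv hB AE).
rewrite vE mulmxDl mul1mx -scalemxAl hBE mulmxDr mulmx1 -scalemxAr.
by congr (_ + _ *: _).
Qed.

Lemma core_normal_form_exists (A : M) : ~ mx_nilpotent A ->
  exists M0, core_normal_form M0 /\ mult_similar A M0.
Proof.
move=> hnil; have hA : A != 0 by apply: contra_not_neq hnil => ->; exists 1%N; rewrite expr1.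
have [s [a [b [c [d [hp AE]]]]]] := mx22_content_decomp p_prime hA.
have [hns|hns] := pselect (mx22_scalar_modp a b c d).
  exact: core_similar_scalar_modp AE hp hns.
have [ht|ht] := eqVneq (a + d) 0; last exact: core_similar_trace_neq0 AE hns ht.
have [hdet|hdet] := eqVneq (a * d - b * c) 0; last exact: core_similar_trace0 AE hns ht hdet.
case: hnil; exists 2%N.
by rewrite AE exprZn (mx22_det0_expS 1 hdet) ht expr1 scale0r scaler0.
Qed.

Lemma nilpotent_primitive_mx22 (a b c d : Z) k : primitive_mx (mx22 a b c d) ->
  mx22 a b c d ^+ k = 0 -> a * d - b * c = 0 /\ a + d = 0.
Proof.
move=> [i [j hu]] hk.
have hdet : a * d - b * c = 0.
  by apply: (zp_expf_eq0 p_prime (k := k)); rewrite -det_mx22 -det_mxX hk det0.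
split => //; case: k hk => [|k] hk; first by move/eqP: hk; rewrite expr0 oner_eq0.
move: hk; rewrite (mx22_det0_expS k hdet) => /matrixP /(_ i j); rewrite !mxE => hij.
case: (zp_mul_eq0 p_prime hij) => [/(zp_expf_eq0 p_prime) // | hij0].
by move: hu; rewrite mxE hij0 unitr0.
Qed.

Lemma traceless_primitive_not_scalar_modp (a b c d : Z) :
  primitive_mx (mx22 a b c d) -> a + d = 0 -> ~ mx22_scalar_modp a b c d.
Proof.
move=> hp ht [hb hc hda]; case: (primitive_mx22 hp).
have dE : d = - a by apply/eqP; rewrite -addr_eq0 addrC ht.
have ha : a \isn't a GRing.unit.
  have -> : a = (d - a) * (- 2^-1).
    rewrite dE; transitivity (a * (2 * 2^-1)); last by ring.
    by rewrite mulrV ?mulr1 // (zp_unit2 p_prime p_odd).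
  exact: (zp_nunitMr p_prime).
by split => //; rewrite dE unitrN.
Qed.

Lemma nilpotent_normal_form_exists (A : M) : mx_nilpotent A ->
  exists M0, nilpotent_normal_form M0 /\ mult_similar A M0.
Proof.
move=> [k hk]; have [->|hA] := eqVneq A 0.
  by exists 0; split; [left | exact: mult_similar_refl].
have [s [a [b [c [d [hp AE]]]]]] := mx22_content_decomp p_prime hA.
have hk1 : mx22 a b c d ^+ k = 0.
  apply: (@zp_scalemx_inj _ p_prime _ _ ((P ^+ s) ^+ k)).
    by rewrite -exprM (pX_neq0 p_prime).
  by rewrite -exprZn -AE hk scaler0.
have [hdet ht] := nilpotent_primitive_mx22 hp hk1.
have [B [hB e]] := mx22_companion_similar p_prime (traceless_primitive_not_scalar_modp hp ht).
exists (P ^+ s *: mx22 0 0 1 0); split; first by right; exists s.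
apply: (mult_similar_pXZ_conj (unitr1 _) hB AE).
by rewrite scale1r e hdet ht oppr0.
Qed.

Lemma nonsquare_class_eq (u e e' : Z) : u \is a GRing.unit ->
  (e = 1 \/ e = rho) -> (e' = 1 \/ e' = rho) -> e' = u ^+ 2 * e -> e = e'.
Proof.
move=> hu [->|->] [->|->] // eE; case: rho_nsq.
  by exists u, 0; rewrite mulr0 addr0 eE mulr1.
have hu2 : u ^+ 2 \is a GRing.unit by rewrite unitrX.
by exists u^-1, 0; rewrite mulr0 addr0 exprVn -[rho](mulKr hu2) -eE mulr1.
Qed.

(* Types (3) and (4) are companion matrices (0, d; 1, t). *)
Definition companion_core (d t : Z) :=
  (exists r, t = P ^+ r) \/
  (t = 0 /\ exists r e, (e = 1 \/ e = rho) /\ d = e * P ^+ r).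

Lemma core_matrix_cases (A0 : M) : core_matrix rho A0 -> [\/ A0 = 1,
  exists r d, (0 < r)%N /\ A0 = 1 + P ^+ r *: mx22 0 d 1 0 |
  exists d t, companion_core d t /\ A0 = mx22 0 d 1 t].
Proof.
case=> [->|[r [d [hr ->]]]|[r [d ->]]|[r [->|->]]].
- exact: Or31.
- by apply: Or32; exists r, d; split; last reflexivity.
- by apply: Or33; exists d, (P ^+ r); split; [left; exists r | reflexivity].
- apply: Or33; exists (P ^+ r), 0; split; last reflexivity.
  by right; split => //; exists r, 1; split; [left | rewrite mul1r].
- apply: Or33; exists (rho * P ^+ r), 0; split; last reflexivity.
  by right; split => //; exists r, rho; split; [right | ].
Qed.

Lemma core_matrix_primitive (A0 : M) : core_matrix rho A0 -> primitive_mx A0.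
Proof.
case/core_matrix_cases => [->|[r [d [_ ->]]]|[d [t [_ ->]]]].
- by exists 0, 0; rewrite mxE unitr1.
- by exists 0, 0; rewrite !mxE /= mulr0 addr0 unitr1.
- by exists 1, 0; rewrite mxE unitr1.
Qed.

Lemma mult_similar1_core (A0 : M) : core_matrix rho A0 -> mult_similar 1 A0 -> A0 = 1.
Proof.
move=> /core_matrix_cases [//|[r [d [_ ->]]]|[d [t [_ ->]]]] /mult_similar1 [u].
- move=> /matrixP /(_ 1 0); rewrite !mxE /= mulr1 add0r => /eqP.
  by rewrite (negbTE (pX_neq0 p_prime r)).
- by move=> /matrixP /(_ 1 0); rewrite !mxE /= => /eqP; rewrite oner_eq0.
Qed.

Lemma core2_not_similar_companion r d d' t : (0 < r)%N ->
  ~ mult_similar (1 + P ^+ r *: mx22 0 d 1 0) (mx22 0 d' 1 t).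
Proof.
case: r => // r _ hs.
have AE : 1 + P ^+ r.+1 *: mx22 0 d 1 0 = 1%:M + P *: (P ^+ r *: mx22 0 d 1 0).
  by rewrite scalerA -exprS.
have [y] := mult_similar_offdiag (i := 1) (j := 0) hs AE isT.
by rewrite mxE /= => yE; move: (zp_nunitp p_prime y); rewrite -yE unitr1.
Qed.

Lemma core2_content_leq r r' d d' : mult_similar
  (1 + P ^+ r *: mx22 0 d 1 0) (1 + P ^+ r' *: mx22 0 d' 1 0) -> (r <= r')%N.
Proof.
move=> hs; have [y] := mult_similar_offdiag (i := 1) (j := 0) hs (erefl _) isT.
rewrite !mxE /= add0r => yE.
exact: (zp_val_leq p_prime yE (unitr1 _)).
Qed.

Lemma core2_mx22 r d : 1 + P ^+ r *: mx22 0 d 1 0 = mx22 1 (P ^+ r * d) (P ^+ r) 1.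
Proof. by rewrite mx22_1 mx22Z mx22D; congr mx22; ring. Qed.

Lemma core2_similar_eq r r' d d' : mult_similar
  (1 + P ^+ r *: mx22 0 d 1 0) (1 + P ^+ r' *: mx22 0 d' 1 0) -> r = r' /\ d = d'.
Proof.
move=> hs; have rr : r = r'.
  by apply/eqP; rewrite eqn_leq (core2_content_leq hs) (core2_content_leq (mult_similar_sym hs)).
subst r'; split => //.
move: hs => /mult_similar_invariants [u [hu]]; rewrite !core2_mx22 !tr_mx22 !det_mx22.
move=> htr hdet _; have u1 : u = 1.
  have h2 : (1 + 1 : Z) != 0 by rewrite -mulr2n unitr_neq0 // (zp_unit2 p_prime p_odd).
  by apply: (zp_mulfI p_prime h2); rewrite mulr1 mulrC -htr.
move: hdet; rewrite u1 expr1n mul1r => /addrI /oppr_inj hd.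
apply: (zp_mulfI p_prime (pX_neq0 p_prime r)); apply: (zp_mulfI p_prime (pX_neq0 p_prime r)).
by transitivity (P ^+ r * d * P ^+ r); [ring | rewrite -hd; ring].
Qed.

Lemma companion_core_similar_eq d t d' t' : companion_core d t -> companion_core d' t' ->
  mult_similar (mx22 0 d 1 t) (mx22 0 d' 1 t') -> d = d' /\ t = t'.
Proof.
move=> h h' /mult_similar_invariants [u [hu]].
rewrite !tr_mx22 !det_mx22 !add0r !mul0r !sub0r !mulr1 => htr hdet _.
have dE : d' = u ^+ 2 * d by apply: oppr_inj; rewrite hdet mulrN.
case: h => [[r tE]|[t0 [r [e [he deE]]]]]; case: h' => [[r' tE']|[t0' [r' [e' [he' deE']]]]].
- have rr : r' = r.
    by apply: (zp_val_uniq p_prime (unitr1 _) hu); rewrite mulr1 -tE' htr tE mulrC.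
  have u1 : u = 1.
    by apply: (zp_mulfI p_prime (pX_neq0 p_prime r)); rewrite mulr1 mulrC -tE -htr tE' rr.
  by rewrite dE htr u1 expr1n !mul1r.
- exfalso; move: htr; rewrite t0' tE => /esym /(zp_mul_eq0 p_prime) [/eqP|/eqP].
    by rewrite (negbTE (unitr_neq0 hu)).
  by rewrite (negbTE (pX_neq0 p_prime r)).
- by exfalso; move: htr; rewrite t0 tE' mulr0 => /eqP; rewrite (negbTE (pX_neq0 p_prime r')).
- have heu : e \is a GRing.unit by case: he => ->; rewrite ?unitr1.
  have he'u : e' \is a GRing.unit by case: he' => ->; rewrite ?unitr1.
  have hue : u ^+ 2 * e \is a GRing.unit by rewrite unitrM unitrX.
  have e'E : P ^+ r' * e' = P ^+ r * (u ^+ 2 * e).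
    by rewrite mulrC -deE' dE deE; ring.
  have rr := zp_val_uniq p_prime he'u hue e'E; subst r'.
  have ee : e' = u ^+ 2 * e by apply: (zp_mulfI p_prime (pX_neq0 p_prime r)).
  by rewrite deE deE' t0 t0' (nonsquare_class_eq hu he he' ee).
Qed.

Lemma core_matrix_uniq (A0 A0' : M) : core_matrix rho A0 -> core_matrix rho A0' ->
  mult_similar A0 A0' -> A0 = A0'.
Proof.
move=> h h' hs.
have [E1|[r [d [hr E2]]]|[d [t [hc E3]]]] := core_matrix_cases h.
  by move: hs; rewrite E1 => /(mult_similar1_core h') ->.
have [E1'|[r' [d' [hr' E2']]]|[d' [t' [hc' E3']]]] := core_matrix_cases h'.
- by move: hs => /mult_similar_sym; rewrite E1' => /(mult_similar1_core h) ->.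
- by move: hs; rewrite E2 E2' => /core2_similar_eq [-> ->]; reflexivity.
- by move: hs; rewrite E2 E3' => /(core2_not_similar_companion hr).
have [E1'|[r' [d' [hr' E2']]]|[d' [t' [hc' E3']]]] := core_matrix_cases h'.
- by move: hs => /mult_similar_sym; rewrite E1' => /(mult_similar1_core h) ->.
- by move: hs => /mult_similar_sym; rewrite E2' E3 => /(core2_not_similar_companion hr').
- by move: hs; rewrite E3 E3' => /(companion_core_similar_eq hc hc') [-> ->].
Qed.

Lemma core_normal_form_uniq (M1 M2 : M) : core_normal_form M1 -> core_normal_form M2 ->
  mult_similar M1 M2 -> M1 = M2.
Proof.
move=> [s [A0 [h0 ->]]] [t [A0' [h0' ->]]] hs.
have st := mult_similar_content_eq p_prime hs (core_matrix_primitive h0)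
  (core_matrix_primitive h0').
by subst t; rewrite (core_matrix_uniq h0 h0' (mult_similar_pXZ p_prime hs)).
Qed.

Lemma nilpotent_normal_form_uniq (M1 M2 : M) : nilpotent_normal_form M1 ->
  nilpotent_normal_form M2 -> mult_similar M1 M2 -> M1 = M2.
Proof.
have N_prim : primitive_mx (mx22 0 0 1 0 : M) by exists 1, 0; rewrite mxE unitr1.
move=> [->|[s ->]] [->|[t ->]] hs //.
- by rewrite (mult_similar0 hs).
- by rewrite (mult_similar0 (mult_similar_sym hs)).
- by rewrite (mult_similar_content_eq p_prime hs N_prim N_prim).
Qed.

End NormalForms.

Theorem mainTheorem19 (p : nat) (p_prime : prime p) (p_odd : odd p)
    (rho : 'Z_[p]) (rho_unit : rho \is a GRing.unit)
    (rho_nsq : nonsquare_mod_p rho) :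
  (forall A : 'M['Z_[p]]_2, mx_nilpotent A ->
     exists! M : 'M['Z_[p]]_2,
       (M = 0 \/ exists s : nat, M = (p%:R ^+ s) *: mx22 0 0 1 0)
       /\ mult_similar A M)
  /\
  (forall A : 'M['Z_[p]]_2, ~ mx_nilpotent A ->
     exists! M : 'M['Z_[p]]_2,
       (exists (s : nat) (A0 : 'M['Z_[p]]_2),
          core_matrix rho A0 /\ M = (p%:R ^+ s) *: A0)
       /\ mult_similar A M).
Proof.
split=> A hA; apply: exists_unique_mult_similar.
- exact: (nilpotent_normal_form_exists p_prime p_odd hA).
- exact: (nilpotent_normal_form_uniq p_prime).
- exact: (core_normal_form_exists p_prime p_odd rho_unit rho_nsq hA).
- exact: (core_normal_form_uniq p_prime p_odd rho_unit rho_nsq).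
Qed.
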